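(* Let $\mathbb F$ be a field, $F_1,\dots,F_m\in\mathbb F[x_1,\dots,x_n]$, and let $C(\vec x,\vec y)$ be an IPS certificate of unsatisfiability of $F_1=\dots=F_m=0$. Let $D=\max_i\deg_{y_i}C$, and let $t$ be the number of terms of $C$ viewed as a polynomial in $y_1,\dots,y_m$ with coefficients in $\mathbb F[\vec x]$. Suppose $C$ and each $F_i$ can be computed by algebraic circuits of size at most $s$. Then a Hilbert-like IPS certificate for this system can be computed by a circuit of size $\mathrm{poly}(D,t,n,s)$. If $|\mathbb F|<T=Dt\binom n2$ and the circuit for $C$ has multiplication gates of fan-in at most $k$, the size bound is instead $\mathrm{poly}(D,t,n,s)\cdot(\log T)^k$.
   Context: An IPS certificate of unsatisfiability of $F_1=\dots=F_m=0$ is a polynomial $C(\vec x,\vec y)\in\mathbb F[x_1,\dots,x_n,y_1,\dots,y_m]$ (placeholder variables $y_i$) with $C(\vec x,\vec 0)=0$ and $C(\vec x,F_1(\vec x),\dots,F_m(\vec x))=1$. It is Hilbert-like if it has the form $\sum_iy_iG_i(\vec x)$. *)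

From HB Require Import structures.
From mathcomp Require Import all_boot all_order all_algebra.
From mathcomp Require Import mpoly.
Set Implicit Arguments. Unset Strict Implicit. Unset Printing Implicit Defensive.
Import Order.TTheory GRing.Theory Num.Theory.
Local Open Scope ring_scope.

(* Algebraic circuits, as straight-line programs.                            *)
(* Gate number j (0-based, in list order) may only read gates with index < j.*)
(* Sum and product gates have unbounded fan-in (list of predecessor indices, *)
(* repetitions allowed). Constants are arbitrary field elements.            *)
Inductive gate (F : Type) : Type :=
  | GVar of nat
  | GConst of F
  | GAdd of seq nat
  | GMul of seq nat.

Definition circuit (F : Type) := seq (gate F).

Definition fanin (F : Type) (g : gate F) : nat :=
  match g with GAdd l | GMul l => size l | _ => 0%N end.

(* size = number of gates + number of wires (edges) *)
Definition csize (F : Type) (c : circuit F) : nat :=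
  \sum_(g <- c) (fanin g).+1.

Definition mul_fanin_le (F : Type) (k : nat) (c : circuit F) : bool :=
  all (fun g => if g is GMul l then (size l <= k)%N else true) c.

Definition gate_wf (F : Type) (N j : nat) (g : gate F) : bool :=
  match g with
  | GVar i => (i < N)%N
  | GConst _ => true
  | GAdd l | GMul l => all (fun i => (i < j)%N) l
  end.

Definition circuit_wf (F : Type) (N : nat) (c : circuit F) : bool :=
  (0 < size c)%N && all (fun p => gate_wf N p.2 p.1) (zip c (iota 0 (size c))).

Section Eval.
Variables (F : fieldType) (N : nat).

Definition var_poly (i : nat) : {mpoly F[N]} :=
  if insub i is Some j then 'X_j else 0.

Definition gate_val (vals : seq {mpoly F[N]}) (g : gate F) : {mpoly F[N]} :=
  match g with
  | GVar i => var_poly i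
  | GConst a => a%:MP
  | GAdd l => \sum_(j <- l) nth 0 vals j
  | GMul l => \prod_(j <- l) nth 0 vals j
  end.

Definition gate_values (c : circuit F) : seq {mpoly F[N]} :=
  foldl (fun vals g => rcons vals (gate_val vals g)) [::] c.

Definition circuit_poly (c : circuit F) : {mpoly F[N]} :=
  last 0 (gate_values c).

Definition computes (c : circuit F) (p : {mpoly F[N]}) : Prop :=
  circuit_wf N c /\ circuit_poly c = p.
End Eval.

(* IPS certificates.  Variables of {mpoly F[n + m]}: indices lshift m j      *)
(* (j < n) are x_{j+1}, indices rshift n i (i < m) are the placeholders      *)
(* y_{i+1}.                                                                   *)
Section IPS.
Variables (F : fieldType) (n m : nat).

Definition subst_y (v : 'I_m -> {mpoly F[n]}) : (n + m).-tuple {mpoly F[n]} :=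
  [tuple match split i with inl j => 'X_j | inr j => v j end | i < n + m].

Definition ips_certificate (Fs : 'I_m -> {mpoly F[n]}) (C : {mpoly F[n + m]})
  : Prop :=
  C \mPo subst_y (fun _ => 0) = 0 /\ C \mPo subst_y Fs = 1.

Definition x_embed (G : {mpoly F[n]}) : {mpoly F[n + m]} :=
  G \mPo [tuple 'X_(lshift m j) | j < n].

Definition hilbert_like (C : {mpoly F[n + m]}) : Prop :=
  exists G : 'I_m -> {mpoly F[n]},
    C = \sum_(i < m) 'X_(rshift n i) * x_embed (G i).

Definition deg_y (C : {mpoly F[n + m]}) (i : 'I_m) : nat :=
  \max_(mo <- msupp C) fun_of_multinom mo (rshift n i).

Definition max_deg_y (C : {mpoly F[n + m]}) : nat :=
  \max_(i < m) deg_y C i.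

(* number of terms of C as a polynomial in y with coefficients in F[x]:
   number of distinct y-exponent vectors among the monomials of C *)
Definition y_terms (C : {mpoly F[n + m]}) : nat :=
  size (undup [seq [seq fun_of_multinom mo (rshift n i) | i <- enum 'I_m] | mo <- msupp C]).
End IPS.

Definition card_ge (F : eqType) (T : nat) : Prop :=
  exists s : seq F, (uniq s /\ T <= size s)%N.

(* Replace every gate p(x, y) of a circuit for C by gates computing p(x, 0),
   p(x, F) and a polynomial sum_i y_i G_i(x) with
   sum_i F_i G_i = p(x, F) - p(x, 0).  An input y_i becomes a copy of the
   circuit for F_i together with the constant 0 and y_i itself; sums are taken
   componentwise and products follow the product rule.  At the output,
   C(x, 0) = 0 and C(x, F) = 1 turn the third component into a Hilbert-like
   certificate.  The resulting circuit has size O(s^2), independently of D, t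
   and of the size of the field. *)

From HB Require Import structures.
From mathcomp Require Import all_boot all_order all_algebra.
From mathcomp Require Import mpoly.
From mathcomp Require Import zify ring.
Set Implicit Arguments. Unset Strict Implicit. Unset Printing Implicit Defensive.
Import Order.TTheory GRing.Theory Num.Theory.
Local Open Scope ring_scope.

Arguments GVar {F} _.
Arguments GConst {F} _.
Arguments GAdd {F} _.
Arguments GMul {F} _.

Section CircuitValues.
Variables (F : fieldType) (N : nat).
Implicit Types (c e : circuit F) (g : gate F).

Definition gates_wf c := all (fun p => gate_wf N p.2 p.1) (zip c (iota 0 (size c))).

Lemma gates_wf_cat c e : gates_wf (c ++ e) =
  gates_wf c && all (fun p => gate_wf N p.2 p.1) (zip e (iota (size c) (size e))).
Proof. by rewrite /gates_wf size_cat iotaD add0n zip_cat ?size_iota // all_cat. Qed.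

Lemma gates_wf_rcons c g : gates_wf (rcons c g) = gates_wf c && gate_wf N (size c) g.
Proof. by rewrite -cats1 gates_wf_cat /= andbT. Qed.

Lemma gate_values_rcons c g :
  gate_values N (rcons c g) = rcons (gate_values N c) (gate_val (gate_values N c) g).
Proof. by rewrite /gate_values foldl_rcons. Qed.

Lemma size_gate_values c : size (gate_values N c) = size c.
Proof.
by elim/last_ind: c => [//|c g IH]; rewrite gate_values_rcons !size_rcons IH.
Qed.

Definition value c k := nth 0 (gate_values N c) k.

Lemma value_rcons c g k : (k < size c)%N -> value (rcons c g) k = value c k.
Proof.
by move=> lt_k; rewrite /value gate_values_rcons nth_rcons size_gate_values lt_k.
Qed.

Lemma value_rcons_last c g : value (rcons c g) (size c) = gate_val (gate_values N c) g.
Proof. by rewrite /value gate_values_rcons nth_rcons size_gate_values ltnn eqxx. Qed.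

Lemma value_cat c e k : (k < size c)%N -> value (c ++ e) k = value c k.
Proof.
elim/last_ind: e => [|e g IH] lt_k; first by rewrite cats0.
by rewrite -rcons_cat value_rcons ?IH // size_cat; lia.
Qed.

Lemma value_last c : value c (size c).-1 = circuit_poly N c.
Proof. by rewrite /value -(size_gate_values c) nth_last. Qed.

Lemma circuit_wf_rcons c g :
  gates_wf c -> gate_wf N (size c) g -> circuit_wf N (rcons c g).
Proof.
by move=> wf_c wf_g; rewrite /circuit_wf -/(gates_wf _) gates_wf_rcons wf_c size_rcons.
Qed.

Lemma circuit_poly_rcons c g :
  circuit_poly N (rcons c g) = gate_val (gate_values N c) g.
Proof. by rewrite /circuit_poly gate_values_rcons last_rcons. Qed.

Lemma value_add2 c i j :
  value (rcons c (GAdd [:: i; j])) (size c) = value c i + value c j.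
Proof. by rewrite value_rcons_last /= !big_cons big_nil addr0. Qed.

Lemma value_mul2 c i j :
  value (rcons c (GMul [:: i; j])) (size c) = value c i * value c j.
Proof. by rewrite value_rcons_last /= !big_cons big_nil mulr1. Qed.

Lemma csize_cat c e : csize (c ++ e) = (csize c + csize e)%N.
Proof. by rewrite /csize big_cat. Qed.

Lemma csize_rcons c g : csize (rcons c g) = (csize c + (fanin g).+1)%N.
Proof. by rewrite -cats1 csize_cat /csize big_seq1. Qed.

End CircuitValues.

Section Embedding.
Variables (F : fieldType) (n m : nat).
Implicit Types (c d : circuit F) (g : gate F).

Definition shift_gate (o : nat) g : gate F :=
  match g with
  | GAdd l => GAdd (map (addn o) l)
  | GMul l => GMul (map (addn o) l)
  | g => g
  end.

Lemma x_embedX (j : 'I_n) : x_embed m ('X_j : {mpoly F[n]}) = 'X_(lshift m j).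
Proof. by rewrite /x_embed comp_mpolyXU -tnth_nth tnth_mktuple. Qed.

Lemma var_poly_embed i : (i < n)%N -> var_poly F (n + m) i = x_embed m (var_poly F n i).
Proof.
move=> lt_in; have lt_inm : (i < n + m)%N by lia.
rewrite /var_poly (insubT (fun k => k < n)%N lt_in).
rewrite (insubT (fun k => k < n + m)%N lt_inm) x_embedX.
by congr (mpolyX _ U_(_)); apply: val_inj.
Qed.

Lemma gate_values_embed c d : gates_wf n d ->
  gate_values (n + m) (c ++ map (shift_gate (size c)) d) =
  gate_values (n + m) c ++ map (x_embed m) (gate_values n d).
Proof.
have shifted (vs : seq {mpoly F[n + m]}) j :
    nth 0 (gate_values (n + m) c ++ vs) (size c + j) = nth 0 vs j.
  by rewrite nth_cat size_gate_values ltnNge leq_addr /= addKn.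
elim/last_ind: d => [|d g IH]; first by rewrite !cats0.
rewrite gates_wf_rcons => /andP[wf_d wf_g].
rewrite map_rcons -rcons_cat !gate_values_rcons IH // map_rcons -rcons_cat.
congr rcons; case: g wf_g => [i|a|l|l] /= wf_g.
- exact: var_poly_embed.
- by rewrite /x_embed comp_mpolyC.
- rewrite big_map /x_embed raddf_sum /= big_seq [RHS]big_seq.
  apply: eq_bigr => j j_l; rewrite shifted (nth_map 0) // size_gate_values.
  exact: (allP wf_g).
- rewrite big_map /x_embed rmorph_prod /= big_seq [RHS]big_seq.
  apply: eq_bigr => j j_l; rewrite shifted (nth_map 0) // size_gate_values.
  exact: (allP wf_g).
Qed.

Lemma gates_wf_embed c d : gates_wf (n + m) c -> gates_wf n d ->
  gates_wf (n + m) (c ++ map (shift_gate (size c)) d).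
Proof.
move=> wf_c; elim/last_ind: d => [|d g IH]; first by rewrite !cats0.
rewrite gates_wf_rcons => /andP[wf_d wf_g].
rewrite map_rcons -rcons_cat gates_wf_rcons IH //= size_cat size_map.
case: g wf_g => [i|a|l|l] /=; [lia | by [] | |];
  by rewrite all_map => /allP lt_l; apply/allP => j /lt_l /=; lia.
Qed.

Lemma csize_shift o d : csize (map (shift_gate o) d) = csize d.
Proof.
by rewrite /csize big_map; apply: eq_bigr => -[i|a|l|l] _ //=; rewrite size_map.
Qed.

Lemma value_embed_last c d : circuit_wf n d ->
  value (n + m) (c ++ map (shift_gate (size c)) d) (size c + (size d).-1) =
  x_embed m (circuit_poly n d).
Proof.
case/andP => d_gt0 wf_d.
rewrite /value gate_values_embed // nth_cat size_gate_values ltnNge leq_addr /= addKn.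
by rewrite (nth_map 0) ?size_gate_values ?prednK // -value_last.
Qed.

End Embedding.

Lemma comp_mpolyA (F : fieldType) (a b c : nat) (p : {mpoly F[a]})
    (t : a.-tuple {mpoly F[b]}) (u : b.-tuple {mpoly F[c]}) :
  (p \mPo t) \mPo u = p \mPo [tuple tnth t i \mPo u | i < a].
Proof.
rewrite (comp_mpolyE p t) raddf_sum /= (comp_mpolyE p); apply: eq_bigr => mo _.
rewrite comp_mpolyZ rmorph_prod /=; congr (_ *: _); apply: eq_bigr => i _.
by rewrite rmorphXn /= tnth_mktuple.
Qed.

Section Hilbert.
Variables (F : fieldType) (n m : nat) (Fs : 'I_m -> {mpoly F[n]}).
Local Notation xe := (x_embed m).

Lemma subst_y_lshift (v : 'I_m -> {mpoly F[n]}) (j : 'I_n) :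
  'X_(lshift m j) \mPo subst_y v = 'X_j.
Proof. by rewrite comp_mpolyXU -tnth_nth tnth_mktuple (unsplitK (inl j)). Qed.

Lemma subst_y_rshift (v : 'I_m -> {mpoly F[n]}) (i : 'I_m) :
  'X_(rshift n i) \mPo subst_y v = v i.
Proof. by rewrite comp_mpolyXU -tnth_nth tnth_mktuple (unsplitK (inr i)). Qed.

Lemma subst_y_x_embed (v : 'I_m -> {mpoly F[n]}) (G : {mpoly F[n]}) :
  xe G \mPo subst_y v = G.
Proof.
rewrite /x_embed comp_mpolyA -[RHS]comp_mpoly_id; congr comp_mpoly.
by apply: eq_from_tnth => j; rewrite !tnth_mktuple subst_y_lshift.
Qed.

Definition hilbert_form (G : 'I_m -> {mpoly F[n]}) : {mpoly F[n + m]} :=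
  \sum_(i < m) 'X_(rshift n i) * xe (G i).

Definition hilbert_diff (a b : {mpoly F[n]}) (h : {mpoly F[n + m]}) : Prop :=
  exists2 G, h = hilbert_form G & \sum_(i < m) Fs i * G i = b - a.

Lemma hilbert_diff_refl a : hilbert_diff a a 0.
Proof.
exists (fun=> 0); last by rewrite subrr big1 // => i _; rewrite mulr0.
by rewrite /hilbert_form big1 // => i _; rewrite /x_embed raddf0 mulr0.
Qed.

Lemma hilbert_diffX (o : 'I_m) : hilbert_diff 0 (Fs o) 'X_(rshift n o).
Proof.
exists (fun i => (i == o)%:R); last first.
  by rewrite subr0 (bigD1 o) //= eqxx mulr1 big1 ?addr0 // => i /negbTE->; rewrite mulr0.
rewrite /hilbert_form (bigD1 o) //= eqxx /x_embed rmorph1 mulr1 big1 ?addr0 //.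
by move=> i /negbTE->; rewrite raddf0 mulr0.
Qed.

Lemma hilbert_diffD a b h a' b' h' :
  hilbert_diff a b h -> hilbert_diff a' b' h' ->
  hilbert_diff (a + a') (b + b') (h + h').
Proof.
move=> [G -> sumG] [G' -> sumG']; exists (fun i => G i + G' i).
  rewrite /hilbert_form -big_split /=; apply: eq_bigr => i _.
  by rewrite /x_embed raddfD mulrDr.
under eq_bigr do rewrite mulrDr.
by rewrite big_split /= sumG sumG'; ring.
Qed.

(* The product rule [b b' - a a' = (b - a) b' + a (b' - a')]. *)
Lemma hilbert_diffM a b h a' b' h' :
  hilbert_diff a b h -> hilbert_diff a' b' h' ->
  hilbert_diff (a * a') (b * b') (h * xe b' + xe a * h').
Proof.
move=> [G -> sumG] [G' -> sumG']; exists (fun i => G i * b' + a * G' i).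
  rewrite /hilbert_form mulr_suml mulr_sumr -big_split /=; apply: eq_bigr => i _.
  by rewrite /x_embed raddfD /= !rmorphM /=; ring.
under eq_bigr do rewrite mulrDr mulrA mulrCA.
by rewrite big_split /= -mulr_suml -mulr_sumr sumG sumG'; ring.
Qed.

Lemma hilbert_diff_certificate h :
  hilbert_diff 0 1 h -> hilbert_like h /\ ips_certificate Fs h.
Proof.
move=> [G -> sumG]; split; first by exists G.
rewrite /ips_certificate /hilbert_form !raddf_sum /=; split.
  by rewrite big1 // => i _; rewrite rmorphM /= subst_y_rshift mul0r.
rewrite subr0 in sumG; rewrite -sumG; apply: eq_bigr => i _.
by rewrite rmorphM /= subst_y_rshift subst_y_x_embed.
Qed.

End Hilbert.

Record wires := Wires { w0 : nat; wF : nat; wH : nat }.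

Definition wires0 := Wires 0 0 0.

Section Blocks.
Variables (F : fieldType) (n m : nat) (Fs : 'I_m -> {mpoly F[n]}).
Local Notation N := (n + m)%N.
Local Notation xe := (x_embed m).
Implicit Types (c d : circuit F) (t u w : wires) (p q : {mpoly F[N]}).

Local Notation at0 p := (p \mPo subst_y (fun=> 0 : {mpoly F[n]})).
Local Notation atF p := (p \mPo subst_y Fs).

Definition tracks c w p : Prop :=
  [/\ [&& w0 w < size c, wF w < size c & wH w < size c]%N,
      value N c (w0 w) = xe (at0 p), value N c (wF w) = xe (atF p)
    & hilbert_diff Fs (at0 p) (atF p) (value N c (wH w))].

Lemma tracks_cat c d w p : tracks c w p -> tracks (c ++ d) w p.
Proof.
case=> /and3P[lt0 ltF ltH] val0 valF hil.
rewrite /tracks size_cat !value_cat //; split => //; apply/and3P; split; lia.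
Qed.

Definition const_block c a :=
  (rcons (rcons c (GConst a)) (GConst 0), Wires (size c) (size c) (size c).+1).

Lemma const_block_ok c a : gates_wf N c ->
  let r := const_block c a in
  [/\ gates_wf N r.1, exists e, r.1 = c ++ e, tracks r.1 r.2 a%:MP
    & csize r.1 = (csize c + 2)%N].
Proof.
move=> wf_c; rewrite /= !gates_wf_rcons wf_c !csize_rcons /=.
split; [by [] | by eexists; rewrite /= -!cats1 -!catA | | lia].
rewrite /tracks /x_embed !comp_mpolyC !size_rcons /=; split.
- apply/and3P; split; lia.
- by rewrite value_rcons ?size_rcons // value_rcons_last.
- by rewrite value_rcons ?size_rcons // value_rcons_last.
- rewrite -(size_rcons c (GConst a)) value_rcons_last /= mpolyC0.
  exact: hilbert_diff_refl.
Qed.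

Definition x_block c i :=
  (rcons (rcons c (GVar i)) (GConst 0), Wires (size c) (size c) (size c).+1).

Lemma x_block_ok c i : gates_wf N c -> (i < n)%N ->
  let r := x_block c i in
  [/\ gates_wf N r.1, exists e, r.1 = c ++ e, tracks r.1 r.2 (var_poly F N i)
    & csize r.1 = (csize c + 2)%N].
Proof.
move=> wf_c lt_in.
rewrite /= !gates_wf_rcons wf_c !csize_rcons /=.
split; [lia | by eexists; rewrite /= -!cats1 -!catA | | lia].
rewrite /tracks var_poly_embed // !subst_y_x_embed !size_rcons /=; split.
- apply/and3P; split; lia.
- by rewrite value_rcons ?size_rcons // value_rcons_last /= var_poly_embed.
- by rewrite value_rcons ?size_rcons // value_rcons_last /= var_poly_embed.
- rewrite -(size_rcons c (GVar i)) value_rcons_last /= mpolyC0.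
  exact: hilbert_diff_refl.
Qed.

Definition y_block c d i :=
  let c1 := c ++ map (shift_gate (size c)) d in
  (rcons (rcons c1 (GConst 0)) (GVar i), Wires (size c1) (size c1).-1 (size c1).+1).

Lemma y_block_ok c d (o : 'I_m) i :
  gates_wf N c -> computes d (Fs o) -> i = (n + o)%N ->
  let r := y_block c d i in
  [/\ gates_wf N r.1, exists e, r.1 = c ++ e, tracks r.1 r.2 (var_poly F N i)
    & csize r.1 = (csize c + csize d + 2)%N].
Proof.
move=> wf_c [wf_d val_d] ->; have /andP[d_gt0 gates_d] := wf_d.
have lt_o : (n + o < N)%N by rewrite ltn_add2l.
have y_o : var_poly F N (n + o) = 'X_(rshift n o).
  rewrite /var_poly (insubT (fun k => k < N)%N lt_o).
  by congr (mpolyX _ U_(_)); apply: val_inj.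
rewrite /= !gates_wf_rcons gates_wf_embed //= lt_o !csize_rcons csize_cat csize_shift /=.
split; [done | by eexists; rewrite /= -!cats1 -!catA | | lia].
rewrite /tracks y_o !subst_y_rshift /= !size_rcons size_cat size_map /=; split.
- apply/and3P; split; lia.
- rewrite value_rcons ?size_rcons ?size_cat ?size_map //.
  rewrite -(size_map (shift_gate (size c)) d) -size_cat value_rcons_last /=.
  by rewrite /x_embed comp_mpoly0 mpolyC0.
- rewrite !value_rcons ?size_rcons ?size_cat ?size_map; try lia.
  have -> : ((size c + size d).-1 = size c + (size d).-1)%N by lia.
  by rewrite value_embed_last // val_d.
- rewrite -(size_map (shift_gate (size c)) d) -size_cat -(size_rcons _ (GConst 0)).
  by rewrite value_rcons_last /= y_o; apply: hilbert_diffX.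
Qed.

Definition add_block c t u :=
  let c1 := rcons c (GAdd [:: w0 t; w0 u]) in
  let c2 := rcons c1 (GAdd [:: wF t; wF u]) in
  (rcons c2 (GAdd [:: wH t; wH u]), Wires (size c) (size c1) (size c2)).

Lemma add_block_ok c t u p q : gates_wf N c -> tracks c t p -> tracks c u q ->
  let r := add_block c t u in
  [/\ gates_wf N r.1, exists e, r.1 = c ++ e, tracks r.1 r.2 (p + q)
    & csize r.1 = (csize c + 9)%N].
Proof.
move=> wf_c [/and3P[t0 tF tH] t0_val tF_val t_hil] [/and3P[u0 uF uH] u0_val uF_val u_hil].
split; last by rewrite /= !csize_rcons /=; lia.
  by rewrite /= !gates_wf_rcons wf_c !size_rcons /=; repeat (apply/andP; split); lia.
  by eexists; rewrite /= -!cats1 -!catA.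
rewrite /tracks !raddfD /=; split.
- rewrite !size_rcons; apply/and3P; split; lia.
- do 2 (rewrite value_rcons; last by rewrite !size_rcons; lia).
  by rewrite value_add2 t0_val u0_val /x_embed raddfD.
- rewrite value_rcons; last by rewrite !size_rcons; lia.
  by rewrite value_add2 !value_rcons // tF_val uF_val /x_embed raddfD.
- by rewrite value_add2 !value_rcons ?size_rcons //; try lia; apply: hilbert_diffD.
Qed.

Definition mul_block c t u :=
  let c1 := rcons c (GMul [:: w0 t; w0 u]) in
  let c2 := rcons c1 (GMul [:: wF t; wF u]) in
  let c3 := rcons c2 (GMul [:: wH t; wF u]) in
  let c4 := rcons c3 (GMul [:: w0 t; wH u]) in
  (rcons c4 (GAdd [:: size c2; size c3]), Wires (size c) (size c1) (size c4)).

Lemma mul_block_ok c t u p q : gates_wf N c -> tracks c t p -> tracks c u q ->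
  let r := mul_block c t u in
  [/\ gates_wf N r.1, exists e, r.1 = c ++ e, tracks r.1 r.2 (p * q)
    & csize r.1 = (csize c + 15)%N].
Proof.
move=> wf_c [/and3P[t0 tF tH] t0_val tF_val t_hil] [/and3P[u0 uF uH] u0_val uF_val u_hil].
split; last by rewrite /= !csize_rcons /=; lia.
  by rewrite /= !gates_wf_rcons wf_c !size_rcons /=; repeat (apply/andP; split); lia.
  by eexists; rewrite /= -!cats1 -!catA.
rewrite /tracks !rmorphM /=; split.
- rewrite !size_rcons; apply/and3P; split; lia.
- do 4 (rewrite value_rcons; last by rewrite !size_rcons; lia).
  by rewrite value_mul2 t0_val u0_val /x_embed rmorphM.
- do 3 (rewrite value_rcons; last by rewrite !size_rcons; lia).
  by rewrite value_mul2 !value_rcons // tF_val uF_val /x_embed rmorphM.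
- rewrite value_add2 value_rcons; last by rewrite !size_rcons.
  rewrite !value_mul2 !value_rcons ?size_rcons //; try lia.
  by rewrite t0_val uF_val; apply: hilbert_diffM.
Qed.

Definition tracks_all d (tr : seq wires) c :=
  forall j, (j < size d)%N -> tracks c (nth wires0 tr j) (value N d j).

Section Fold.
Variables (idx : {mpoly F[N]}) (op : Monoid.law idx).
Variables (block : circuit F -> wires -> wires -> circuit F * wires) (cost : nat).
Hypothesis block_ok : forall c t u p q,
  gates_wf N c -> tracks c t p -> tracks c u q ->
  let r := block c t u in
  [/\ gates_wf N r.1, exists e, r.1 = c ++ e, tracks r.1 r.2 (op p q)
    & csize r.1 = (csize c + cost)%N].

Fixpoint fold_blocks (tr : seq wires) c w (l : seq nat) : circuit F * wires :=
  if l is j :: l' then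
    let r := block c w (nth wires0 tr j) in fold_blocks tr r.1 r.2 l'
  else (c, w).

Lemma fold_blocks_ok tr (f : nat -> {mpoly F[N]}) l c w p :
  gates_wf N c -> tracks c w p ->
  (forall j, j \in l -> tracks c (nth wires0 tr j) (f j)) ->
  let r := fold_blocks tr c w l in
  [/\ gates_wf N r.1, exists e, r.1 = c ++ e,
      tracks r.1 r.2 (op p (\big[op/idx]_(j <- l) f j))
    & csize r.1 = (csize c + cost * size l)%N].
Proof.
elim: l c w p => [|j l IH] c w p wf_c w_p tr_l /=.
  by rewrite big_nil Monoid.mulm1 muln0 addn0; split => //; exists [::]; rewrite cats0.
have [wf_c1 [d1 def_c1] tr_c1 size_c1] := block_ok wf_c w_p (tr_l j (mem_head j l)).
have tr_l1 k : k \in l -> tracks (block c w (nth wires0 tr j)).1 (nth wires0 tr k) (f k).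
  by move=> k_l; rewrite def_c1; apply/tracks_cat/tr_l; rewrite inE k_l orbT.
have [wf_r [d2 def_r] tr_r size_r] := IH _ _ _ wf_c1 tr_c1 tr_l1.
split => //; first by exists (d1 ++ d2); rewrite def_r def_c1 catA.
  by rewrite big_cons Monoid.mulmA.
by rewrite size_r size_c1 mulnS addnA.
Qed.

Lemma fold_gate_ok d tr c a l :
  gates_wf N c -> tracks_all d tr c -> all (fun j => j < size d)%N l ->
  let r := fold_blocks tr (const_block c a).1 (const_block c a).2 l in
  [/\ gates_wf N r.1, exists e, r.1 = c ++ e,
      tracks r.1 r.2 (op a%:MP (\big[op/idx]_(j <- l) value N d j))
    & csize r.1 = (csize c + 2 + cost * size l)%N].
Proof.
move=> wf_c tr_d /allP lt_l.
have [wf_c1 [e1 def_c1] tr_c1 size_c1] := const_block_ok a wf_c.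
have tr_l j : j \in l -> tracks (const_block c a).1 (nth wires0 tr j) (value N d j).
  by move=> j_l; rewrite def_c1; apply/tracks_cat/tr_d/lt_l.
have [wf_r [e2 def_r] tr_r size_r] := fold_blocks_ok wf_c1 tr_c1 tr_l.
split => //; first by exists (e1 ++ e2); rewrite def_r def_c1 catA.
by rewrite size_r size_c1.
Qed.

End Fold.

Section Compile.
Variables (cFs : nat -> circuit F) (s : nat).
Hypothesis cFs_ok : forall o : 'I_m, computes (cFs o) (Fs o) /\ (csize (cFs o) <= s)%N.

Definition compile_gate c (tr : seq wires) (g : gate F) : circuit F * wires :=
  match g with
  | GVar i => if (i < n)%N then x_block c i else y_block c (cFs (i - n)) i
  | GConst a => const_block c a
  | GAdd l => fold_blocks add_block tr (const_block c 0).1 (const_block c 0).2 l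
  | GMul l => fold_blocks mul_block tr (const_block c 1).1 (const_block c 1).2 l
  end.

Lemma compile_gate_ok c tr d g : gates_wf N c -> tracks_all d tr c ->
  gate_wf N (size d) g ->
  let r := compile_gate c tr g in
  [/\ gates_wf N r.1, exists e, r.1 = c ++ e,
      tracks r.1 r.2 (gate_val (gate_values N d) g)
    & (csize r.1 <= csize c + (s + 15) * (fanin g).+1)%N].
Proof.
move=> wf_c tr_d; case: g => [i|a|l|l] /= wf_g.
- case: ifP => lt_in.
    by have [? ? ? ->] := x_block_ok wf_c lt_in; split => //; lia.
  have lt_o : (i - n < m)%N by lia.
  have [cF_o size_o] := cFs_ok (Ordinal lt_o).
  have def_i : i = (n + Ordinal lt_o)%N by rewrite /=; lia.
  by have [? ? ? ->] := y_block_ok wf_c cF_o def_i; split => //; lia.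
- by have [? ? ? ->] := const_block_ok a wf_c; split => //; lia.
- have [? ? tr_r ->] := fold_gate_ok add_block_ok 0 wf_c tr_d wf_g.
  split => //; first by rewrite /= mpolyC0 add0r in tr_r.
  by move: (size l) => k; nia.
- have [? ? tr_r ->] := fold_gate_ok mul_block_ok 1 wf_c tr_d wf_g.
  split => //; first by rewrite /= mpolyC1 mul1r in tr_r.
  by move: (size l) => k; nia.
Qed.

Definition compile (d : circuit F) : circuit F * seq wires :=
  foldl (fun st g => let r := compile_gate st.1 st.2 g in (r.1, rcons st.2 r.2))
    ([::], [::]) d.

Lemma compile_ok d : gates_wf N d ->
  let r := compile d in
  [/\ gates_wf N r.1, size r.2 = size d, tracks_all d r.2 r.1
    & (csize r.1 <= (s + 15) * csize d)%N].
Proof.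
elim/last_ind: d => [|d g IH]; first by rewrite /csize big_nil.
rewrite gates_wf_rcons => /andP[wf_d wf_g].
have [wf_c size_tr tr_d size_c] := IH wf_d.
rewrite /compile foldl_rcons -/(compile d) /=.
have [wf_r [e def_r] tr_g size_r] := compile_gate_ok wf_c tr_d wf_g.
split => //; first by rewrite !size_rcons size_tr.
- move=> j; rewrite size_rcons ltnS leq_eqVlt => /orP[/eqP->|lt_j].
    by rewrite nth_rcons size_tr ltnn eqxx value_rcons_last.
  by rewrite nth_rcons size_tr lt_j value_rcons // def_r; apply/tracks_cat/tr_d.
- by rewrite csize_rcons; nia.
Qed.

Lemma compile_certificate C cC : ips_certificate Fs C -> computes cC C ->
  exists (H : {mpoly F[N]}) (cH : circuit F),
    [/\ hilbert_like H, ips_certificate Fs H, computes cH H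
      & (csize cH <= (s + 15) * csize cC + 2)%N].
Proof.
move=> [C_0 C_F] [/andP[cC_gt0 wf_cC] val_cC].
have [wf_c _ tr_cC size_c] := compile_ok wf_cC.
set c := (compile cC).1 in wf_c tr_cC size_c.
have lt_last : ((size cC).-1 < size cC)%N by rewrite ltn_predL.
have [_ _ _ hil] := tr_cC _ lt_last.
rewrite value_last val_cC C_0 C_F in hil.
have [hil_like cert] := hilbert_diff_certificate hil.
set w := nth wires0 _ _ in hil hil_like cert.
exists (value N c (wH w)), (rcons c (GAdd [:: wH w])); split => //.
  split; last by rewrite circuit_poly_rcons /= big_seq1.
  by rewrite circuit_wf_rcons //= andbT; have [/and3P[]] := tr_cC _ lt_last.
by rewrite csize_rcons leq_add2r.
Qed.

End Compile.
End Blocks.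

Lemma hilbert_like_certificate_circuit (F : fieldType) (n m : nat)
    (Fs : 'I_m -> {mpoly F[n]}) (C : {mpoly F[n + m]}) (s : nat) :
  ips_certificate Fs C ->
  (forall i : 'I_m, exists cF : circuit F, computes cF (Fs i) /\ (csize cF <= s)%N) ->
  (exists cC : circuit F, computes cC C /\ (csize cC <= s)%N) ->
  exists (H : {mpoly F[n + m]}) (cH : circuit F),
    [/\ hilbert_like H, ips_certificate Fs H, computes cH H
      & (csize cH <= (s + 15) * s + 2)%N].
Proof.
move=> cert cFs_ex [cC [comp_cC size_cC]].
have [cF cF_ok] := fin_all_exists cFs_ex.
pose cFs k := if insub k is Some o then cF o else [::].
have cFs_ok (o : 'I_m) : computes (cFs o) (Fs o) /\ (csize (cFs o) <= s)%N.
  by rewrite /cFs valK; apply: cF_ok.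
have [H [cH [like_H cert_H comp_cH size_cH]]] := compile_certificate cFs_ok cert comp_cC.
exists H, cH; split => //; apply: leq_trans size_cH _.
by rewrite leq_add2r leq_mul2l size_cC orbT.
Qed.

Theorem proposition2p1 :
  exists c e : nat,
  forall (F : fieldType) (n m : nat) (Fs : 'I_m -> {mpoly F[n]})
         (C : {mpoly F[n + m]}) (s : nat),
    ips_certificate Fs C ->
    (forall i : 'I_m, exists cF : circuit F, computes cF (Fs i) /\ (csize cF <= s)%N) ->
    let D := max_deg_y C in
    let t := y_terms C in
    let T := (D * t * 'C(n, 2))%N in
    let B := (c * (D + t + n + s + 1) ^ e)%N in
    ((exists cC : circuit F, computes cC C /\ (csize cC <= s)%N) ->
     card_ge F T ->
     exists (H : {mpoly F[n + m]}) (cH : circuit F),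
       hilbert_like H /\ ips_certificate Fs H /\
       computes cH H /\ (csize cH <= B)%N)
    /\
    (forall k : nat,
     (exists cC : circuit F,
        [/\ computes cC C, (csize cC <= s)%N & mul_fanin_le k cC]) ->
     ~ card_ge F T ->
     exists (H : {mpoly F[n + m]}) (cH : circuit F),
       hilbert_like H /\ ips_certificate Fs H /\
       computes cH H /\ (csize cH <= B * (up_log 2 T) ^ k)%N).
Proof.
exists 15%N, 2%N => F n m Fs C s cert cFs_ex D t T B.
have small_H (cC : circuit F) : computes cC C -> (csize cC <= s)%N ->
    exists (H : {mpoly F[n + m]}) (cH : circuit F),
      hilbert_like H /\ ips_certificate Fs H /\ computes cH H /\ (csize cH <= B)%N.
  move=> comp_cC size_cC.
  have [H [cH [? ? ? size_cH]]] :=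
    hilbert_like_certificate_circuit cert cFs_ex (ex_intro _ cC (conj comp_cC size_cC)).
  exists H, cH; do 3 split => //; apply: leq_trans size_cH _; rewrite /B; nia.
split=> [[cC [comp_cC size_cC]] _ | k [cC [comp_cC size_cC _]] small_F].
  exact: small_H comp_cC size_cC.
have [H [cH [? [? [? size_cH]]]]] := small_H cC comp_cC size_cC.
exists H, cH; do 3 split => //.
have T_gt1 : (1 < T)%N.
  by rewrite ltnNge; apply/negP => T_le1; apply: small_F; exists [:: 0].
by rewrite (leq_trans size_cH) // leq_pmulr // expn_gt0 up_log_gt0 T_gt1.
Qed.
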